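(* Let $\mathcal{D}$ be a joint distribution of $(X, A, Y)$ with $A, Y \in \{0,1\}$ and $0 < \Pr_{\mathcal{D}}(A=0) < 1$. Let $g:\mathcal{X}\to\mathcal{Z}$ be a measurable encoder with $\mathcal{Z}\subseteq\mathbb{R}^{d}$ and $\sup_{z\in\mathcal{Z}}\|z\|\le R$, and let $Z=g(X)$. Let $\mathcal{F}_A$ be the set of all measurable functions $\mathcal{Z}\to\{0,1\}$. Define $\delta_{Y\mid A} := |\Pr_{\mathcal{D}_0}(Y=1) - \Pr_{\mathcal{D}_1}(Y=1)|$. Then for every measurable $h:\mathcal{Z}\to[0,1]$ with $\|h\|_L\le C$, $$\varepsilon_{Y\mid A=0}(h\circ g) + \varepsilon_{Y\mid A=1}(h\circ g) \;\ge\; \delta_{Y\mid A} - C\cdot W_1(g_\sharp\mathcal{D}_0, g_\sharp\mathcal{D}_1) \;\ge\; \delta_{Y\mid A} - 2RC\cdot \mathrm{Adv}_{\mathcal{D}}(\mathcal{F}_A).$$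
   Context: $\mathcal{D}_a$ denotes the conditional distribution of $\mathcal{D}$ given $A=a$. For a measurable map $g$, $g_\sharp\mathcal{D}$ is the pushforward $E'\mapsto \mathcal{D}(\{x: g(x)\in E'\})$; $g_\sharp\mathcal{D}_a$ is the law of $Z=g(X)$ given $A=a$. For distributions $P,P'$ on a metric space $\Omega$, $W_1(P,P') := \sup_{\|f\|_L\le 1}\left|\int f\,dP - \int f\,dP'\right|$, the supremum over real-valued $1$-Lipschitz functions, where $\|f\|_L$ is the Lipschitz constant ($\mathcal{Z}$ carries the Euclidean metric). The predictor $h(z)$ is interpreted as the predicted probability that $Y=1$, and the conditional cross-entropy error is $\varepsilon_{Y\mid A=a}(h\circ g) := \mathbb{E}_{\mathcal{D}}\big[-Y\ln h(g(X)) - (1-Y)\ln(1-h(g(X))) \,\big|\, A=a\big]$. The advantage of a class $\mathcal{F}_A$ of functions $\mathcal{Z}\to\{0,1\}$ is $\mathrm{Adv}_{\mathcal{D}}(\mathcal{F}_A) := \sup_{f\in\mathcal{F}_A}\left|\Pr_{\mathcal{D}_1}(f(Z)=1) - \Pr_{\mathcal{D}_0}(f(Z)=1)\right|$. *)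

From HB Require Import structures.
From mathcomp Require Import all_boot all_order all_algebra.
From mathcomp Require Import all_classical all_reals all_analysis.
Set Implicit Arguments. Unset Strict Implicit. Unset Printing Implicit Defensive.
Import Order.TTheory GRing.Theory Num.Theory.
Local Open Scope classical_set_scope.
Local Open Scope ring_scope.

Section fair_defs.
Context {R : realType}.

(* Euclidean norm and distance on R^n, represented as n.-tuple R
   (with its product sigma-algebra, i.e. the Borel sigma-algebra of R^n). *)
Definition enorm (n : nat) (z : n.-tuple R) : R :=
  Num.sqrt (\sum_(i < n) (tnth z i) ^+ 2).
Definition edist (n : nat) (z w : n.-tuple R) : R :=
  Num.sqrt (\sum_(i < n) (tnth z i - tnth w i) ^+ 2).

Definition lipschitz_with (n : nat) (Zs : set (n.-tuple R)) (L : R)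
  (f : n.-tuple R -> R) : Prop :=
  forall z w, Zs z -> Zs w -> `|f z - f w| <= L * edist z w.

Definition cond_distr d (T : measurableType d) (P : set T -> \bar R)
  (A : T -> bool) (a : bool) : set T -> \bar R :=
  fun E => (P (E `&` A @^-1` [set a]) * ((fine (P (A @^-1` [set a])))^-1)%:E)%E.

(* binary cross-entropy loss of predicted probability p for label y,
   with the convention -ln 0 = +oo *)
Definition xent (p : R) (y : bool) : \bar R :=
  if y then (if 0 < p then (- ln p)%:E else +oo%E)
  else (if p < 1 then (- ln (1 - p))%:E else +oo%E).

(* 1-Wasserstein distance (Kantorovich-Rubinstein dual form) between two
   distributions on Zs ⊆ R^n *)
Definition W1 (n : nat) (Zs : set (n.-tuple R))
  (mu nu : set (n.-tuple R) -> \bar R) : \bar R :=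
  ereal_sup [set `| (\int[mu]_z (f z)%:E - \int[nu]_z (f z)%:E)%E |%E
            | f in [set f : n.-tuple R -> R |
                     measurable_fun setT f /\ lipschitz_with Zs 1 f]].

Definition Adv (n : nat) (mu0 mu1 : set (n.-tuple R) -> \bar R) : \bar R :=
  ereal_sup [set `| (mu1 (f @^-1` [set true]) - mu0 (f @^-1` [set true]))%E |%E
            | f in [set f : n.-tuple R -> bool | measurable_fun setT f]].

End fair_defs.

From Pilot Require Import Defs.
From HB Require Import structures.
From mathcomp Require Import all_boot all_order all_algebra.
From mathcomp Require Import all_classical all_reals all_analysis.
From mathcomp Require Import lra measurable_realfun.
Set Implicit Arguments. Unset Strict Implicit. Unset Printing Implicit Defensive.
Import Order.TTheory GRing.Theory Num.Theory.
Local Open Scope classical_set_scope.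
Local Open Scope ring_scope.

(* Write F := g \o X, mu_a for the conditional law given A = a and
   q_a := E_{mu_a}[h (F)] for the mean prediction of group a.
   - Calibration: |y - p| <= xent p y for p in [0, 1]; integrating gives
     |Pr_{mu_a}(Y = 1) - q_a| <= eps_a              ([prob_mean_gap_le_xent]).
   - Transport: h / C is 1-Lipschitz on Zs, so by the dual form of W1,
     |q_0 - q_1| <= C W1(F#mu_0, F#mu_1)       ([lipschitz_mean_gap_le_W1]).
   The triangle inequality through q_0 and q_1 yields the first bound.
   - Advantage: a 1-Lipschitz f on Zs (a set of diameter <= 2 Rb) equals,
     up to a constant, a measurable phi valued in [0, 2 Rb]
     ([lipschitz_clamp]); the Hahn decomposition of mu_0 - mu_1 bounds the
     integral gap of such a phi by 2 Rb times the mass gap of one measurable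
     set ([hahn_integral_gap]), itself bounded by Adv.  Hence
     W1 <= 2 Rb Adv ([W1_le_Adv]), which gives the second bound. *)

(* Two points of the ball of radius Rb are at distance at most 2 Rb
   (parallelogram law: |z - w|^2 <= 2 |z|^2 + 2 |w|^2). *)
Lemma edist_le_diam (R : realType) n (z w : n.-tuple R) (Rb : R) :
  enorm z <= Rb -> enorm w <= Rb -> Defs.edist z w <= 2 * Rb.
Proof.
rewrite /enorm /Defs.edist => hz hw.
set sz := \sum_(i < n) _ in hz; set sw := \sum_(i < n) _ in hw.
set sd := \sum_(i < n) _.
have sum_sq_ge0 (u : 'I_n -> R) : 0 <= \sum_(i < n) u i ^+ 2.
  by apply: sumr_ge0 => i _; exact: sqr_ge0.
have parallelogram : sd <= 2 * sz + 2 * sw.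
  rewrite /sd /sz /sw !mulr_sumr -big_split /=; apply: ler_sum => i _.
  have := sqr_ge0 (tnth z i + tnth w i); nra.
have Rb0 : 0 <= Rb := le_trans (sqrtr_ge0 _) hz.
have sq_le (s : R) : 0 <= s -> Num.sqrt s <= Rb -> s <= Rb ^+ 2.
  by move=> s0 hs; rewrite -(sqr_sqrtr s0) lerXn2r // ?nnegrE ?sqrtr_ge0.
have hsz := sq_le sz (sum_sq_ge0 _) hz; have hsw := sq_le sw (sum_sq_ge0 _) hw.
rewrite -(ger0_norm (_ : 0 <= 2 * Rb)) ?mulr_ge0 // -sqrtr_sqr.
by rewrite ler_sqrt ?sqr_ge0 //; nra.
Qed.

Section finite_measure_integral.
Context d (T : measurableType d) (R : realType).
Implicit Types (mu nu : {finite_measure set T -> \bar R}) (f : T -> R).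

Lemma bounded_integrable mu (D : set T) f (M : R) :
  measurable D -> measurable_fun setT f -> (forall x, `|f x| <= M) ->
  mu.-integrable D (EFin \o f).
Proof.
move=> mD mf fM; apply/integrableP; split.
  exact/measurable_EFinP/measurable_funTS.
apply: (@le_lt_trans _ _ (\int[mu]_(x in D) M%:E)%E).
  apply: ge0_le_integral => //=.
  - by do 2 apply: measurableT_comp => //; exact: measurable_funTS.
  - by move=> x _; rewrite lee_fin fM.
by rewrite integral_cst // ltey_eq fin_numM // fin_num_measure.
Qed.

Lemma EFin_Rintegral (mu : {measure set T -> \bar R}) (D : set T) f :
  measurable D -> mu.-integrable D (EFin \o f) ->
  (\int[mu]_(x in D) f x)%:E = (\int[mu]_(x in D) (f x)%:E)%E.
Proof. by move=> mD intf; rewrite fineK // integrable_fin_num. Qed.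

Lemma le_Rintegral_setwise mu nu (N : set T) f (M : R) :
  measurable N -> (forall S, measurable S -> S `<=` N -> mu S <= nu S)%E ->
  measurable_fun setT f -> (forall x, 0 <= f x <= M) ->
  \int[mu]_(x in N) f x <= \int[nu]_(x in N) f x.
Proof.
move=> mN munu mf f0M.
have fM x : `|f x| <= M by case/andP: (f0M x) => f0 fM; rewrite ger0_norm.
have intf mu' : mu'.-integrable N (EFin \o f) := bounded_integrable mu' mN mf fM.
rewrite -lee_fin (EFin_Rintegral mN (intf mu)) (EFin_Rintegral mN (intf nu)).
rewrite (eq_measure_integral (mrestr mu mN)); last first.
  by move=> S mS SN; rewrite -[RHS]/(mu (S `&` N)) setIidl.
rewrite [leRHS](eq_measure_integral (mrestr nu mN)); last first.
  by move=> S mS SN; rewrite -[RHS]/(nu (S `&` N)) setIidl.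
apply: ge0_le_measure_integral => //.
- by move=> S mS; apply: munu; [exact: measurableI | exact: subIsetr].
- by move=> x; rewrite lee_fin; case/andP: (f0M x).
- exact/measurable_EFinP.
Qed.

(* Hahn step: for 0 <= phi <= M the integral gap between two finite
   measures is at most M times their mass gap on the positive set P of
   mu0 - mu1.  On the negative set phi is integrated against a smaller
   measure; on P the same holds for M - phi. *)
Lemma hahn_integral_gap mu0 mu1 (phi : T -> R) (M : R) :
  measurable_fun setT phi -> (forall x, 0 <= phi x <= M) ->
  exists2 E, measurable E &
    \int[mu0]_x phi x - \int[mu1]_x phi x <= M * (fine (mu0 E) - fine (mu1 E)).
Proof.
move=> mphi phiM.
pose nu := cadd (charge_of_finite_measure mu0)
                (copp (charge_of_finite_measure mu1)).
have [Pp [Nn [[mP posP] [mN negN] PNT PN0]]] := Hahn_decomposition nu.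
exists Pp => //.
have phiN x : `|phi x| <= M by case/andP: (phiM x) => ? ?; rewrite ger0_norm.
have cphiM x : 0 <= M - phi x <= M.
  by case/andP: (phiM x) => ? ?; apply/andP; split; lra.
have split_PN mu :
    \int[mu]_x phi x = \int[mu]_(x in Pp) phi x + \int[mu]_(x in Nn) phi x.
  rewrite -PNT Rintegral_setU //; last by rewrite disj_set2E PN0.
  by rewrite PNT; exact: bounded_integrable _ measurableT mphi phiN.
have on_N : \int[mu0]_(x in Nn) phi x <= \int[mu1]_(x in Nn) phi x.
  apply: (le_Rintegral_setwise mN _ mphi phiM) => S mS SN.
  by rewrite -sube_le0; exact: negN.
have mcphi := measurable_funB (measurable_cst M) mphi.
have on_P :
    \int[mu1]_(x in Pp) (M - phi x) <= \int[mu0]_(x in Pp) (M - phi x).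
  apply: (le_Rintegral_setwise mP _ mcphi cphiM) => S mS SP.
  by rewrite -sube_ge0 ?fin_num_measure //; exact: posP.
have complP mu : \int[mu]_(x in Pp) (M - phi x) =
                 M * fine (mu Pp) - \int[mu]_(x in Pp) phi x.
  rewrite RintegralB ?Rintegral_cst //.
    exact: finite_measure_integrable_cst.
  exact: bounded_integrable _ mP mphi phiN.
move: on_N on_P; rewrite !complP !split_PN; lra.
Qed.

End finite_measure_integral.

(* The indicator of a measurable set is one of the tests defining Adv. *)
Lemma set_gap_le_Adv (R : realType) n
    (L0 L1 : {finite_measure set (n.-tuple R) -> \bar R}) (E : set (n.-tuple R)) :
  measurable E -> (`|fine (L1 E) - fine (L0 E)|%:E <= Adv L0 L1)%E.
Proof.
move=> mE; rewrite -abse_EFin EFinB !fineK ?fin_num_measure //.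
have indE : (fun z => `[< E z >]) @^-1` [set true] = E.
  by apply/seteqP; split => z /=; [move/asboolP | move=> Ez; apply/asboolP].
apply: ereal_sup_ubound; exists (fun z => `[< E z >]); last by rewrite indE.
by apply: (measurable_fun_bool true); rewrite setTI indE.
Qed.

(* A function valued in [0, M] has integral gap at most M Adv: apply the
   Hahn step in the direction of the sign of the gap. *)
Lemma integral_gap_le_Adv (R : realType) n
    (L0 L1 : {finite_measure set (n.-tuple R) -> \bar R})
    (phi : n.-tuple R -> R) (M : R) :
  measurable_fun setT phi -> (forall z, 0 <= phi z <= M) ->
  (`|\int[L0]_z phi z - \int[L1]_z phi z|%:E <= M%:E * Adv L0 L1)%E.
Proof.
move=> mphi phiM.
have M0 : 0 <= M by case/andP: (phiM [tuple of nseq n 0]) => ? ?; lra.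
have M0E : (0 <= M%:E)%E by rewrite lee_fin.
have [g0|g0] := leP 0 (\int[L0]_z phi z - \int[L1]_z phi z).
- have [E mE gapE] := hahn_integral_gap L0 L1 mphi phiM.
  apply: le_trans (lee_wpmul2l M0E (set_gap_le_Adv L0 L1 mE)).
  rewrite -EFinM lee_fin ger0_norm // (le_trans gapE) // ler_wpM2l // distrC.
  exact: ler_norm.
- have [E mE gapE] := hahn_integral_gap L1 L0 mphi phiM.
  apply: le_trans (lee_wpmul2l M0E (set_gap_le_Adv L0 L1 mE)).
  rewrite -EFinM lee_fin ltr0_norm // opprB (le_trans gapE) // ler_wpM2l //.
  exact: ler_norm.
Qed.

(* On a nonempty set of radius Rb, a 1-Lipschitz f is, up to the constant
   inf f(Zs), a measurable function valued in [0, 2 Rb]: subtract the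
   infimum and clamp. *)
Lemma lipschitz_clamp (R : realType) n (Zs : set (n.-tuple R)) (Rb : R)
    (f : n.-tuple R -> R) (z0 : n.-tuple R) :
  Zs z0 -> (forall z, Zs z -> enorm z <= Rb) ->
  measurable_fun setT f -> lipschitz_with Zs 1 f ->
  exists m : R, exists2 phi : n.-tuple R -> R,
    measurable_fun setT phi /\ (forall z, 0 <= phi z <= 2 * Rb) &
    forall z, Zs z -> f z = phi z + m.
Proof.
move=> Zz0 hRb mf Lf.
have osc z w : Zs z -> Zs w -> f w - 2 * Rb <= f z.
  move=> Zz Zw; have := Lf _ _ Zz Zw; rewrite mul1r => /le_trans.
  move=> /(_ _ (edist_le_diam (hRb _ Zz) (hRb _ Zw))).
  by rewrite ler_norml => /andP[? _]; lra.
set S := [set f z | z in Zs].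
have lbS : has_lbound S by exists (f z0 - 2 * Rb) => _ [z Zz <-]; exact: osc.
have neS : S !=set0 by exists (f z0), z0.
exists (inf S); exists (fun z => Num.min (Num.max (f z - inf S) 0) (2 * Rb)).
  split => [|z].
    by apply/measurable_minr/measurable_cst/measurable_maxr/measurable_cst;
      exact: measurable_funB.
  have Rb0 : 0 <= Rb := le_trans (sqrtr_ge0 _) (hRb _ Zz0).
  by rewrite le_min le_max lexx orbT ge_min lexx orbT /= mulr_ge0.
move=> z Zz.
have inf_le : inf S <= f z by apply: ge_inf => //; exists z.
have le_inf : f z - 2 * Rb <= inf S.
  by apply: lb_le_inf => // _ [w Zw <-]; exact: osc.
rewrite (_ : Num.max _ _ = f z - inf S); last by apply/max_idPl; lra.
by rewrite (_ : Num.min _ _ = f z - inf S); [lra | apply/min_idPl; lra].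
Qed.

Lemma probability_inhabited d (T : measurableType d) (R : realType)
    (P : probability T R) : [set: T] !=set0.
Proof.
apply/set0P/eqP => T0; have := probability_setT P; rewrite T0 measure0 => /eqP.
by rewrite eq_sym; apply/negP; rewrite eqe oner_eq0.
Qed.

Lemma Rintegral_cst_probability d (T : measurableType d) (R : realType)
    (P : probability T R) (c : R) : \int[P]_x c = c.
Proof.
by rewrite Rintegral_cst // -[X in fine X]/(P setT) probability_setT mulr1.
Qed.

Section laws.
Context d (T : measurableType d) (R : realType) (n : nat).
Variables (Zs : set (n.-tuple R)) (F : {mfun T >-> n.-tuple R}).
Hypothesis FZ : forall x, Zs (F x).
Implicit Types (mu : probability T R).

Lemma integrable_comp_range mu (u : n.-tuple R -> R) (M : R) :
  measurable_fun setT u -> (forall z, Zs z -> `|u z| <= M) ->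
  mu.-integrable setT (EFin \o (u \o F)).
Proof.
move=> mu_ uM; apply: (bounded_integrable _ measurableT).
  exact: measurableT_comp mu_ (measurable_funPT F).
by move=> x; exact: uM _ (FZ x).
Qed.

Lemma integral_distribution_range mu (u : n.-tuple R -> R) (M : R) :
  measurable_fun setT u -> (forall z, Zs z -> `|u z| <= M) ->
  (\int[distribution mu F]_z (u z)%:E)%E = (\int[mu]_x u (F x))%:E.
Proof.
move=> mu_ uM; have intuF := integrable_comp_range mu mu_ uM.
rewrite integral_pushforward //.
- by rewrite EFin_Rintegral.
- exact/measurable_EFinP.
Qed.

(* Transport: a C-Lipschitz h valued in [0, 1] on Zs has mean gap at most
   C W1 between the laws of F; for C > 0 the test function is h / C. *)
Lemma lipschitz_mean_gap_le_W1 (mu0 mu1 : probability T R)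
    (h : n.-tuple R -> R) (C : R) :
  measurable_fun setT h -> (forall z, Zs z -> 0 <= h z <= 1) ->
  0 <= C -> lipschitz_with Zs C h ->
  (`|\int[mu0]_x h (F x) - \int[mu1]_x h (F x)|%:E
     <= C%:E * W1 Zs (distribution mu0 F) (distribution mu1 F))%E.
Proof.
move=> mh h01 C0 hC.
have hB z : Zs z -> `|h z| <= 1.
  by move=> Zz; case/andP: (h01 z Zz) => ? ?; rewrite ger0_norm.
move: C0; rewrite le_eqVlt => /predU1P[C0|Cpos].
  have [x0 _] := probability_inhabited mu0.
  have hF x : h (F x) = h (F x0).
    apply/eqP; rewrite -subr_eq0 -normr_le0 -(mul0r (Defs.edist (F x) (F x0))).
    by rewrite C0; exact: hC.
  have mean_hF mu : \int[mu]_x h (F x) = h (F x0).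
    by under eq_Rintegral do rewrite hF; rewrite Rintegral_cst_probability.
  by rewrite !mean_hF subrr normr0 -C0 mul0e.
pose f z := h z / C.
have invC : `|C^-1| = C^-1 by rewrite gtr0_norm ?invr_gt0.
have mf : measurable_fun setT f by apply: measurable_funM.
have Lf : lipschitz_with Zs 1 f.
  move=> z w Zz Zw; rewrite /f -mulrBl normrM invC mul1r.
  by rewrite ler_pdivrMr // mulrC; exact: hC.
have fB z : Zs z -> `|f z| <= C^-1.
  move=> Zz; have /andP[h0 h1] := h01 z Zz.
  by rewrite /f normrM invC ger0_norm // ler_piMl // invr_ge0 ltW.
have mean_f mu :
    (\int[distribution mu F]_z (f z)%:E)%E = (\int[mu]_x h (F x) / C)%:E.
  rewrite (integral_distribution_range mu mf fB) RintegralZr //.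
  exact: integrable_comp_range mh hB.
have gap_le_W1 : (`|\int[mu0]_x h (F x) / C - \int[mu1]_x h (F x) / C|%:E
                  <= W1 Zs (distribution mu0 F) (distribution mu1 F))%E.
  by rewrite -abse_EFin EFinB -!mean_f; apply: ereal_sup_ubound; exists f.
rewrite -mulrBl normrM invC in gap_le_W1.
rewrite -[X in X%:E](mulfVK (lt0r_neq0 Cpos)) mulrC EFinM.
by apply: lee_wpmul2l => //; rewrite lee_fin ltW.
Qed.

(* W1 <= 2 Rb Adv: replace each 1-Lipschitz test f by its clamped version,
   which has the same integral gap because both laws are probabilities. *)
Lemma W1_le_Adv (mu0 mu1 : probability T R) (Rb : R) :
  (forall z, Zs z -> enorm z <= Rb) ->
  (W1 Zs (distribution mu0 F) (distribution mu1 F)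
     <= (2 * Rb)%:E * Adv (distribution mu0 F) (distribution mu1 F))%E.
Proof.
move=> hRb; apply: ge_ereal_sup => _ [f [mf Lf] <-].
have [x0 _] := probability_inhabited mu0.
have [m [phi [mphi phiB] fE]] := lipschitz_clamp (FZ x0) hRb mf Lf.
have phiN z : `|phi z| <= 2 * Rb.
  by case/andP: (phiB z) => ? ?; rewrite ger0_norm.
have fN z : Zs z -> `|f z| <= 2 * Rb + `|m|.
  by move=> Zz; rewrite fE // (le_trans (ler_normD _ _)) // lerD2r.
have phiF mu : \int[distribution mu F]_z phi z = \int[mu]_x phi (F x).
  rewrite {1}/Rintegral.
  by rewrite (integral_distribution_range mu mphi (fun z _ => phiN z)).
have shift mu : (\int[distribution mu F]_z (f z)%:E)%E =
                (\int[distribution mu F]_z phi z + m)%:E.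
  rewrite (integral_distribution_range mu mf fN) phiF.
  under eq_Rintegral do rewrite (fE _ (FZ _)).
  rewrite RintegralD ?Rintegral_cst_probability //.
    exact: integrable_comp_range mphi (fun z _ => phiN z).
  exact: finite_measure_integrable_cst.
rewrite (shift mu0) (shift mu1) -EFinB abse_EFin opprD addrACA subrr addr0.
exact: integral_gap_le_Adv _ _ mphi phiB.
Qed.

End laws.

(* Cross-entropy dominates the absolute error, by ln x <= x - 1. *)
Lemma abs_error_le_xent (R : realType) (p : R) (y : bool) :
  0 <= p <= 1 -> (`|y%:R - p|%:E <= xent p y)%E.
Proof.
move=> /andP[p0 p1]; case: y; rewrite /xent /=.
- case: ifPn => hp; last by rewrite leey.
  rewrite lee_fin ger0_norm; last lra.
  by have := @le_ln1Dx R (p - 1) ltac:(lra); rewrite addrC subrK; lra.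
- case: ifPn => hp; last by rewrite leey.
  rewrite lee_fin sub0r normrN ger0_norm //.
  by have := @le_ln1Dx R (- p) ltac:(lra); lra.
Qed.

Lemma measurable_xent d (T : measurableType d) (R : realType)
    (u : T -> R) (v : T -> bool) :
  measurable_fun setT u -> measurable_fun setT v ->
  measurable_fun setT (fun w => xent (u w) (v w)).
Proof.
move=> mu mv; apply: measurable_fun_ifT => //.
- apply: measurable_fun_ifT; last exact: measurable_cst.
  + exact: (measurable_fun_ltr (f := fun=> 0)).
  + apply/measurable_EFinP; apply: measurableT_comp => //.
    by apply: measurableT_comp => //; exact: measurable_ln.
- apply: measurable_fun_ifT; last exact: measurable_cst.
  + exact: (measurable_fun_ltr (g := fun=> 1)).
  + apply/measurable_EFinP; apply: measurableT_comp => //.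
    apply: (measurableT_comp (f := @ln R) (g := fun w => 1 - u w)).
      exact: measurable_ln.
    exact: measurable_funB.
Qed.

Lemma prob_mean_gap_le_xent d (T : measurableType d) (R : realType)
    (mu : {finite_measure set T -> \bar R}) (Y : T -> bool) (q : T -> R) :
  measurable_fun setT Y -> measurable_fun setT q -> (forall x, 0 <= q x <= 1) ->
  (`|fine (mu (Y @^-1` [set true])) - \int[mu]_x q x|%:E
     <= \int[mu]_x xent (q x) (Y x))%E.
Proof.
move=> mY mq q01.
have mYr : measurable_fun setT (fun x => (Y x)%:R : R).
  exact: (measurableT_comp (f := fun b : bool => b%:R : R)).
have mYq := measurable_funB mYr mq.
have intY : mu.-integrable setT (EFin \o (fun x => (Y x)%:R : R)).
  apply: (bounded_integrable (M := 1) _ measurableT mYr) => x.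
  by case: (Y x); rewrite ?normr1 ?normr0.
have intq : mu.-integrable setT (EFin \o q).
  apply: (bounded_integrable (M := 1) _ measurableT mq) => x.
  by case/andP: (q01 x) => ? ?; rewrite ger0_norm.
have errB x : `|(Y x)%:R - q x| <= 1.
  by case/andP: (q01 x); case: (Y x) => /= ? ?;
    rewrite ler_norml; apply/andP; split; lra.
have mY1 : measurable (Y @^-1` [set true]).
  by rewrite -[X in measurable X]setTI; exact: mY.
have massE : fine (mu (Y @^-1` [set true])) = \int[mu]_x (Y x)%:R.
  rewrite -[Y @^-1` _]setIT -integral_indic //; congr fine.
  apply: eq_integral => x _; rewrite indicE; case Yx: (Y x).
    by rewrite (mem_set (Yx : (Y @^-1` [set true]) x)).
  by rewrite memNset //= Yx.
rewrite massE -RintegralB //.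
apply: le_trans (_ : (\int[mu]_x `|(Y x)%:R - q x|)%:E <= _)%E.
  rewrite lee_fin le_normr_Rintegral //.
  exact: bounded_integrable _ measurableT mYq errB.
rewrite EFin_Rintegral //; last first.
  apply: (bounded_integrable _ measurableT (measurableT_comp _ mYq)) => // x.
  by rewrite normr_id; exact: errB.
apply: ge0_le_integral => //.
- by apply/measurable_EFinP/measurableT_comp.
- exact: measurable_xent.
- by move=> x _; exact: abs_error_le_xent.
Qed.

(* Triangle inequality through q0 and q1, in extended reals (the transport
   bound K may be infinite). *)
Lemma sub_le_add_triangle (R : realType) (p0 p1 q0 q1 : R) (K e0 e1 : \bar R) :
  (`|p0 - q0|%:E <= e0 -> `|q0 - q1|%:E <= K -> `|p1 - q1|%:E <= e1 ->
   `|p0 - p1|%:E - K <= e0 + e1)%E.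
Proof.
move=> h0 hK h1; case: K hK => [k| |] hK; last by move: hK; rewrite leeNy_eq.
- rewrite -EFinB (le_trans _ (leeD h0 h1)) // -EFinD lee_fin.
  move: hK; rewrite lee_fin => hk.
  have := ler_normD (p0 - q0) (q0 - q1); have := ler_normD (p0 - q1) (q1 - p1).
  rewrite [`|q1 - p1|]distrC !subrKA; lra.
- by rewrite /= leNye.
Qed.

Lemma cond_distr_mnormalize d (T : measurableType d) (R : realType)
    (P : probability T R) (A : T -> bool) (a : bool)
    (mAa : measurable (A @^-1` [set a])) :
  (0 < P (A @^-1` [set a]))%E -> cond_distr P A a = mnormalize (mrestr P mAa) P.
Proof.
move=> Pa; apply/funext => E.
have Pfin : P (A @^-1` [set a]) \is a fin_num by rewrite fin_num_measure.
rewrite /mnormalize; case: ifPn => [degenerate|_].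
  exfalso; move: degenerate.
  change ((P ([set: T] `&` A @^-1` [set a]) == 0)
          || (P ([set: T] `&` A @^-1` [set a]) == +oo)%E -> False).
  rewrite setTI (gt_eqF Pa) /=.
  by move: Pfin; rewrite fin_numE => /andP[_ /negP].
change (P (E `&` A @^-1` [set a]) * ((fine (P (A @^-1` [set a])))^-1)%:E
        = P (E `&` A @^-1` [set a])
          * ((fine (P ([set: T] `&` A @^-1` [set a])))^-1)%:E)%E.
by rewrite setTI.
Qed.

Theorem theorem1 (R : realType)
  (dO : measure_display) (Omega : measurableType dO) (P : probability Omega R)
  (dX : measure_display) (TX : measurableType dX)
  (X : Omega -> TX) (A Y : Omega -> bool)
  (mX : measurable_fun setT X) (mA : measurable_fun setT A)
  (mY : measurable_fun setT Y)
  (hA0 : (0 < P (A @^-1` [set false]) < 1)%E)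
  (n : nat) (Zs : set (n.-tuple R)) (Rb : R)
  (g : TX -> n.-tuple R) (mg : measurable_fun setT g)
  (gZ : forall x, Zs (g x))
  (hRb : forall z, Zs z -> enorm z <= Rb)
  (C : R) (h : n.-tuple R -> R) (mh : measurable_fun setT h)
  (h01 : forall z, Zs z -> 0 <= h z <= 1)
  (hC0 : 0 <= C) (hC : lipschitz_with Zs C h) :
  let D := cond_distr P A in
  let law := fun a => pushforward (D a) (g \o X) in
  let eps := fun a => (\int[D a]_w xent (h (g (X w))) (Y w))%E in
  let PrY1 := fun a => fine (D a (Y @^-1` [set true])) in
  let delta := `|PrY1 false - PrY1 true| in
  (delta%:E - C%:E * W1 Zs (law false) (law true) <= eps false + eps true)%E /\
  ((delta%:E - (2 * Rb * C)%:E * Adv (law false) (law true))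
     <= delta%:E - C%:E * W1 Zs (law false) (law true))%E.
Proof.
move=> D law eps PrY1 delta.
have mAa a : measurable (A @^-1` [set a]).
  by rewrite -[X in measurable X]setTI; exact: mA.
(* Both groups have positive probability, so both conditionals are laws. *)
have PA a : (0 < P (A @^-1` [set a]))%E.
  case: a; last by case/andP: hA0.
  have -> : A @^-1` [set true] = ~` (A @^-1` [set false]).
    by apply/seteqP; split => w /=; case: (A w).
  by rewrite probability_setC // sube_gt0; case/andP: hA0.
pose mu a := mnormalize (mrestr P (mAa a)) P.
have DE a : D a = mu a by exact: cond_distr_mnormalize.
pose F : {mfun Omega >-> n.-tuple R} :=
  HB.pack (g \o X) (isMeasurableFun.Build _ _ _ _ _ (measurableT_comp mg mX)).
have FZ w : Zs (F w) := gZ (X w).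
have calibration a :=
  prob_mean_gap_le_xent (mu a) mY (measurableT_comp mh (measurable_funPT F))
    (fun w => h01 _ (FZ w)).
have transport := lipschitz_mean_gap_le_W1 FZ (mu false) (mu true) mh h01 hC0 hC.
have W1_Adv := W1_le_Adv FZ (mu false) (mu true) hRb.
rewrite /delta /PrY1 /eps /law !DE.
split.
  exact: sub_le_add_triangle (calibration false) transport (calibration true).
apply: leeB => //; rewrite mulrC EFinM -muleA.
by apply: lee_wpmul2l; rewrite ?lee_fin.
Qed.
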